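(* Let $\mathcal{I}\subseteq\mathcal{M}_m$ be decreasing, $r=\max_{u\in\mathcal{I}}\deg(u)$, and $f,g\in\mathcal{I}_r$. Suppose that either (1) the two largest indices in $\operatorname{ind}\bigl(fg/\gcd(f,g)\bigr)$ both belong to $\operatorname{ind}(f)$, or both belong to $\operatorname{ind}(g)$; or (2) $\deg(\gcd(f,g))<r-2$. Then $$\bigl|\mathrm{LTA}(m,2)\cdot f+\mathrm{LTA}(m,2)\cdot g\bigr|=\bigl|\mathrm{LTA}(m,2)\cdot f\bigr|\cdot\bigl|\mathrm{LTA}(m,2)\cdot g\bigr|.$$
   Context: $\mathcal{M}_m$ is the set of square-free monomials in $x_0,\dots,x_{m-1}$ (in $\mathbf{R}_m=\mathbb{F}_2[x_0,\dots,x_{m-1}]/(x_i^2-x_i)$). For a monomial $f$, $\operatorname{ind}(f)$ is its set of variable indices, $\deg f=|\operatorname{ind} f|$; $fg$ has index set $\operatorname{ind}(f)\cup\operatorname{ind}(g)$, $\gcd(f,g)$ has index set $\operatorname{ind}(f)\cap\operatorname{ind}(g)$. Decreasing sets: $f\preceq_w g$ iff $f\mid g$; for equal degree $f=x_{i_1}\cdots x_{i_s}$, $g=x_{j_1}\cdots x_{j_s}$ (increasing indices), $f\preceq_{sh} g$ iff $i_\ell\le j_\ell$ for all $\ell$; $f\preceq g$ iff $f\preceq_{sh}g^*\preceq_w g$ for some $g^*$; $\mathcal{I}$ is decreasing if $f\in\mathcal{I}$, $g\preceq f$ imply $g\in\mathcal{I}$; $\mathcal{I}_r$ is the set of degree-$r$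 elements of $\mathcal{I}$. $\mathrm{LTA}(m,2)$ is the group of pairs $(\mathbf{B},\varepsilon)$, $\mathbf{B}=(b_{i,j})$ binary lower triangular $m\times m$ with unit diagonal, $\varepsilon\in\mathbb{F}_2^m$, acting on a monomial $u$ by $x_i\mapsto x_i+\sum_{j<i}b_{i,j}x_j+\varepsilon_i$ for $i\in\operatorname{ind}(u)$; $\mathrm{LTA}(m,2)\cdot f$ is the orbit (a set of polynomials). $A+B=\{a+b: a\in A,b\in B\}$. *)

From mathcomp Require Import all_boot all_order all_algebra.
Set Implicit Arguments. Unset Strict Implicit. Unset Printing Implicit Defensive.

(* The ring R_m = F_2[x_0..x_{m-1}]/(x_i^2 - x_i), represented by its       *)
(* canonical normal form: an element is an F_2-linear combination of        *)
(* square-free monomials, i.e. the set of square-free monomials occurring   *)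
(* with coefficient 1.  A square-free monomial is given by its index set    *)
(* ind(u) : {set 'I_m}.                                                     *)

Notation monomial m := {set 'I_m}.
Notation Rpoly m := {set {set 'I_m}}.

Section Ring.
Variable m : nat.

(* addition in characteristic 2: symmetric difference of supports *)
Definition padd (p q : Rpoly m) : Rpoly m := (p :|: q) :\: (p :&: q).
Definition pzero : Rpoly m := set0.
Definition pone : Rpoly m := [set (set0 : monomial m)].
Definition pvar (i : 'I_m) : Rpoly m := [set [set i]].
Definition pconst (b : bool) : Rpoly m := if b then pone else pzero.
Definition pmono (u : monomial m) : Rpoly m := [set u].

(* multiplication: monomials multiply by union of index sets (x_i^2 = x_i) *)
Definition pmul (p q : Rpoly m) : Rpoly m :=
  \big[padd/pzero]_(a in p) \big[padd/pzero]_(b in q) pmono (a :|: b).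

Definition sorted_ind (u : monomial m) : seq nat :=
  sort leq [seq val i | i <- enum u].

(* f <=_w g iff f | g *)
Definition prec_w (f g : monomial m) : bool := f \subset g.

Definition prec_sh (f g : monomial m) : bool :=
  (#|f| == #|g|) && all2 leq (sorted_ind f) (sorted_ind g).

Definition prec (f g : monomial m) : bool :=
  [exists gs : monomial m, prec_sh f gs && prec_w gs g].

Definition decreasing (I : {set monomial m}) : Prop :=
  forall f g : monomial m, f \in I -> prec g f -> g \in I.

Definition maxdeg (I : {set monomial m}) : nat := \max_(u in I) #|u|.

Definition lower_unitriangular (B : 'M[bool]_m) : bool :=
  [forall i, [forall j, (B i j == (val i == val j)) || (val j < val i)]].

Definition LTA : {set 'M[bool]_m * {ffun 'I_m -> bool}} :=
  [set Be | lower_unitriangular Be.1].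

Definition lta_image (B : 'M[bool]_m) (eps : {ffun 'I_m -> bool}) (i : 'I_m)
  : Rpoly m :=
  padd (pvar i)
       (padd (\big[padd/pzero]_(j < m | (val j < val i) && B i j) pvar j)
             (pconst (eps i))).

Definition lta_act (Be : 'M[bool]_m * {ffun 'I_m -> bool}) (u : monomial m)
  : Rpoly m :=
  \big[pmul/pone]_(i in u) lta_image Be.1 Be.2 i.

Definition lta_orbit (f : monomial m) : {set Rpoly m} :=
  [set lta_act Be f | Be in LTA].

Definition sumset (A B : {set Rpoly m}) : {set Rpoly m} :=
  [set padd a b | a in A, b in B].

Definition two_largest_in (D S : {set 'I_m}) : Prop :=
  exists a b : 'I_m,
    [/\ a \in D, b \in D, val a < val b,
        (forall c, c \in D -> c != a -> c != b -> val c < val a)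
      & (a \in S) && (b \in S)].

End Ring.

From mathcomp Require Import all_boot all_order all_algebra zify.
Set Implicit Arguments. Unset Strict Implicit. Unset Printing Implicit Defensive.

(* Order square-free monomials by comparing their largest indices first.  The
   image of a monomial u under (B, eps) is the product over i in u of the affine
   forms x_i + (lower variables) + eps_i, so its leading monomial is u itself.
   Peeling off the largest variable of f shows that the sum of two distinct
   images of f has a "lowered" leading monomial: ind(f) with one index i removed
   and possibly one smaller index j < i added.  If a + b = a' + b' with a, a' in
   the orbit of f, b, b' in the orbit of g and (a, b) <> (a', b'), then
   a + a' = b + b' is nonzero and its leading monomial is lowered from both f and
   g.  For f, g of the same degree, each of conditions (1) and (2) forbids such a
   common lowered monomial, so (a, b) |-> a + b is injective on the product. *)

Section OrbitSums.
Variable m : nat.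
Local Notation poly := (Rpoly m).
Local Notation mon := (monomial m).
Local Notation pzero := (pzero m).
Local Notation pone := (pone m).
Local Notation pconst := (pconst m).
Local Notation padd := (@padd m).
Local Notation pmul := (@pmul m).

Lemma mem_padd (p q : poly) v : (v \in padd p q) = (v \in p) (+) (v \in q).
Proof. by rewrite !inE; case: (v \in p); case: (v \in q). Qed.

Lemma mem_bigpadd (I : finType) (P : pred I) (F : I -> poly) v :
  (v \in \big[padd/pzero]_(i | P i) F i) = \big[addb/false]_(i | P i) (v \in F i).
Proof. by apply: (big_morph (fun p : poly => v \in p)) => [p q|]; rewrite ?mem_padd ?inE. Qed.

Lemma mem_pmul (p q : poly) v :
  (v \in pmul p q) = \big[addb/false]_(a in p) \big[addb/false]_(b in q) (v == a :|: b).
Proof.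
rewrite mem_bigpadd; apply: eq_bigr => a _.
by rewrite mem_bigpadd; apply: eq_bigr => b _; rewrite inE.
Qed.

Lemma bigaddb_exists (I : finType) (P F : pred I) :
  \big[addb/false]_(i | P i) F i -> exists2 i, P i & F i.
Proof.
move=> PF; apply/exists_inP; apply: contraLR PF => /exists_inPn nPF.
by rewrite big1 // => i /nPF /negbTE.
Qed.

Lemma mem_pmulP (p q : poly) v :
  v \in pmul p q -> exists a b, [/\ a \in p, b \in q & v = a :|: b].
Proof.
rewrite mem_pmul => /bigaddb_exists [a pa /bigaddb_exists [b qb /eqP ->]].
by exists a, b.
Qed.

(* [peval p S] is the value of [p] at the 0/1 point with support [S]. *)
Definition peval (p : poly) (S : mon) : bool := \big[addb/false]_(u in p) (u \subset S).

Lemma peval_padd p q S : peval (padd p q) S = peval p S (+) peval q S.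
Proof.
rewrite /peval (big_mkcond (mem (padd p q))) (big_mkcond (mem p)) (big_mkcond (mem q)).
rewrite -big_split /=; apply: eq_bigr => u _; rewrite mem_padd.
by case: (u \in p); case: (u \in q); case: (u \subset S).
Qed.

Lemma peval_pzero S : peval pzero S = false.
Proof. by rewrite /peval big_set0. Qed.

Lemma peval_pone S : peval pone S = true.
Proof. by rewrite /peval big_set1 sub0set. Qed.

Lemma peval_pvar i S : peval (pvar i) S = (i \in S).
Proof. by rewrite /peval big_set1 sub1set. Qed.

Lemma peval_pconst b S : peval (pconst b) S = b.
Proof. by case: b; rewrite ?peval_pone ?peval_pzero. Qed.

Lemma peval_bigpadd (I : finType) (P : pred I) (F : I -> poly) S :
  peval (\big[padd/pzero]_(i | P i) F i) S = \big[addb/false]_(i | P i) peval (F i) S.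
Proof. exact: (big_morph (peval^~ S) (fun p q => peval_padd p q S) (peval_pzero S)). Qed.

Lemma peval_pmul p q S : peval (pmul p q) S = peval p S && peval q S.
Proof.
rewrite peval_bigpadd; under eq_bigr do rewrite peval_bigpadd.
rewrite /peval big_distrl /=; apply: eq_bigr => a _.
by rewrite big_distrr /=; apply: eq_bigr => b _; rewrite big_set1 subUset.
Qed.

Lemma peval_bigpmul (A : {set 'I_m}) (F : 'I_m -> poly) S :
  peval (\big[pmul/pone]_(i in A) F i) S = \big[andb/true]_(i in A) peval (F i) S.
Proof. exact: (big_morph (peval^~ S) (fun p q => peval_pmul p q S) (peval_pone S)). Qed.

(* Evaluated at a monomial [u] of minimal size in [p], [p] only sees [u]. *)
Lemma peval_eq0 (p : poly) : (forall S, peval p S = false) -> p = pzero.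
Proof.
move=> p0; apply/eqP; apply: contraT => /set0Pn [u0 pu0].
have [u pu umin] := arg_minnP (fun v : mon => #|v|) pu0.
have := p0 u; rewrite /peval (bigD1 u) //= subxx big1 // => v /andP [pv /eqP vu].
apply: contraTF (umin v pv) => vsu; rewrite -ltnNge proper_card //.
by rewrite properEneq vsu andbT; apply/eqP.
Qed.

Lemma padd_eq0 (p q : poly) : (padd p q == pzero) = (p == q).
Proof.
apply/eqP/eqP => [/setP pq0 | ->]; last by apply/setP => v; rewrite mem_padd addbb inE.
by apply/setP => v; move: (pq0 v); rewrite mem_padd inE; case: (v \in p); case: (v \in q).
Qed.

Lemma peval_inj (p q : poly) : (forall S, peval p S = peval q S) -> p = q.
Proof.
move=> pq; apply/eqP; rewrite -padd_eq0; apply/eqP/peval_eq0 => S.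
by rewrite peval_padd pq addbb.
Qed.

Lemma padd_pmul_padd (x r r' a a' : poly) :
  padd (pmul (padd x r) a) (pmul (padd x r') a') =
  padd (pmul x (padd a a')) (padd (pmul r a) (pmul r' a')).
Proof.
apply: peval_inj => S; rewrite !(peval_pmul, peval_padd).
by case: (peval x S); case: (peval r S); case: (peval r' S); case: (peval a S); case: (peval a' S).
Qed.

Lemma padd_pmul_padd_same (x r r' a : poly) :
  padd (pmul (padd x r) a) (pmul (padd x r') a) = pmul (padd r r') a.
Proof.
apply: peval_inj => S; rewrite !(peval_pmul, peval_padd).
by case: (peval x S); case: (peval r S); case: (peval r' S); case: (peval a S).
Qed.

(* The binary number with bit set [u]: comparing weights is the monomial order
   that compares largest indices first. *)
Definition mweight (u : mon) : nat := \sum_(j in u) 2 ^ j.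

Lemma mweight_set1 (i : 'I_m) : mweight [set i] = 2 ^ i.
Proof. by rewrite /mweight big_set1. Qed.

Lemma mweightD1 (u : mon) (t : 'I_m) : t \in u -> mweight u = 2 ^ t + mweight (u :\ t).
Proof. exact: big_setD1. Qed.

Lemma mweightU_disjoint (a b : mon) :
  [disjoint a & b] -> mweight (a :|: b) = mweight a + mweight b.
Proof. by move=> dab; rewrite /mweight -bigU //; apply: eq_bigl => j; rewrite inE. Qed.

Lemma mweightU (a b : mon) : mweight (a :|: b) <= mweight a + mweight b.
Proof.
rewrite /mweight big_mkcond [X in _ <= X + _]big_mkcond [X in _ <= _ + X]big_mkcond.
rewrite -big_split leq_sum // => j _; rewrite inE.
by case: (j \in a); case: (j \in b); rewrite ?leq_addr.
Qed.

Lemma mweight_below (v : mon) (t : 'I_m) :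
  (forall j, j \in v -> j < t) -> mweight v < 2 ^ t.
Proof.
move=> vt; apply: (@leq_ltn_trans (\sum_(j < t) 2 ^ j)).
  rewrite (big_ord_widen_cond _ (fun _ => true) (fun j => 2 ^ j) (ltnW (ltn_ord t))).
  rewrite /mweight big_mkcond [X in _ <= X]big_mkcond leq_sum // => j _.
  by case: ifP => // /vt ->.
elim: (nat_of_ord t) => [|n IH]; first by rewrite big_ord0.
by rewrite big_ord_recr expnS mul2n -addnn ltn_add2r.
Qed.

Lemma set_max_index (A : mon) : A != set0 -> exists2 t, t \in A & forall j, j \in A :\ t -> j < t.
Proof.
case/set0Pn=> t0 At0; have [t At tmax] := arg_maxnP (fun j : 'I_m => val j) At0.
by exists t => // j /setD1P [jt /tmax /=]; rewrite leq_eqVlt val_eqE (negbTE jt).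
Qed.

Lemma mweight_inj : injective mweight.
Proof.
move=> u v; have [n] := ubnP #|u :|: v|; elim: n u v => // n IH u v ltn wuv.
have [/eqP|/set_max_index [t tuv tmax]] := eqVneq (u :|: v) set0.
  by rewrite setU_eq0 => /andP [/eqP -> /eqP ->].
have below_t (w : mon) : w \subset u :|: v -> t \notin w -> mweight w < 2 ^ t.
  move=> /subsetP wuv' tw; apply: mweight_below => j jw; apply: tmax.
  by rewrite in_setD1 wuv' // andbT; apply: contraNneq tw => <-.
have [tu|tu] := boolP (t \in u); have [tv|tv] := boolP (t \in v).
- rewrite -(setD1K tu) -(setD1K tv) (IH (u :\ t) (v :\ t)) //.
    by rewrite -setDUl -ltnS (leq_trans _ ltn) // (cardsD1 t (u :|: v)) tuv.
  by move: wuv; rewrite (mweightD1 tu) (mweightD1 tv) => /addnI.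
- have := below_t v (subsetUr u v) tv; rewrite -wuv (mweightD1 tu); lia.
- have := below_t u (subsetUl u v) tu; rewrite wuv (mweightD1 tv); lia.
- by move: tuv; rewrite inE (negbTE tu) (negbTE tv).
Qed.

Definition lead_mono (p : poly) (M : mon) :=
  M \in p /\ forall v, v \in p -> mweight v <= mweight M.

Lemma lead_mono_uniq (p : poly) M M' : lead_mono p M -> lead_mono p M' -> M = M'.
Proof.
by move=> [pM Mmax] [pM' M'max]; apply/mweight_inj/eqP; rewrite eqn_leq Mmax ?M'max.
Qed.

Lemma lead_mono_pvar (t : 'I_m) : lead_mono (pvar t) [set t].
Proof. by split=> [|v]; rewrite inE // => /eqP ->. Qed.

Lemma lead_mono_pmul (p q : poly) a b : lead_mono p a -> lead_mono q b -> [disjoint a & b] ->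
  lead_mono (pmul p q) (a :|: b).
Proof.
move=> [pa amax] [qb bmax] dab; have wab := mweightU_disjoint dab.
have top a' b' : a' \in p -> b' \in q -> a :|: b = a' :|: b' -> a' = a /\ b' = b.
  move=> pa' qb' Eab; have := mweightU a' b'; have := amax _ pa'; have := bmax _ qb'.
  by rewrite -Eab wab => ? ? ?; split; apply: mweight_inj; lia.
split; last first.
  move=> v /mem_pmulP [a' [b' [pa' qb' ->]]]; rewrite wab.
  by apply: leq_trans (mweightU a' b') _; apply: leq_add; [apply: amax | apply: bmax].
rewrite mem_pmul (bigD1 a) //= (bigD1 b) //= eqxx big1 => [|b' /andP [qb' b'b]]; last first.
  by apply: contraNF b'b => /eqP /(top a b' pa qb') [_ ->].
rewrite big1 // => a' /andP [pa' a'a]; rewrite big1 // => b' qb'.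
by apply: contraNF a'a => /eqP /(top a' b' pa' qb') [-> _].
Qed.

Lemma lead_mono_padd_lt (p q : poly) M :
  lead_mono p M -> (forall v, v \in q -> mweight v < mweight M) -> lead_mono (padd p q) M.
Proof.
move=> [pM Mmax] qlt; split.
  by rewrite mem_padd pM; apply/negP => /qlt; rewrite ltnn.
move=> v; rewrite mem_padd; have [/Mmax //|_ /= /qlt] := boolP (v \in p).
exact: ltnW.
Qed.

Definition affine (P : pred 'I_m) (c : bool) : poly :=
  padd (\big[padd/pzero]_(j | P j) pvar j) (pconst c).

Lemma peval_affine (P : pred 'I_m) c S :
  peval (affine P c) S = \big[addb/false]_(j | P j) (j \in S) (+) c.
Proof.
by rewrite peval_padd peval_bigpadd peval_pconst; under eq_bigr do rewrite peval_pvar.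
Qed.

Lemma eq_affine (P Q : pred 'I_m) c : P =1 Q -> affine P c = affine Q c.
Proof. by move=> PQ; rewrite /affine (eq_bigl _ _ PQ). Qed.

Lemma padd_affine (P Q : pred 'I_m) c d :
  padd (affine P c) (affine Q d) = affine [pred j | P j (+) Q j] (c (+) d).
Proof.
apply: peval_inj => S; rewrite peval_padd !peval_affine /=.
rewrite (big_mkcond P) (big_mkcond Q) (big_mkcond (fun j => P j (+) Q j)).
rewrite addbACA -big_split; congr (_ (+) _); apply: eq_bigr => j _.
by case: (P j); case: (Q j); case: (j \in S).
Qed.

Lemma pone_affine : pone = affine pred0 true.
Proof. by apply: peval_inj => S; rewrite peval_pone peval_affine big_pred0. Qed.

Lemma affineD1 (P : pred 'I_m) c (k : 'I_m) :
  P k -> affine P c = padd (pvar k) (affine [pred j | P j && (j != k)] c).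
Proof.
move=> Pk; apply: peval_inj => S.
by rewrite peval_padd peval_pvar !peval_affine (bigD1 k) //= addbA.
Qed.

Lemma mem_affine (P : pred 'I_m) c v : v \in affine P c -> v = set0 \/ exists2 j, P j & v = [set j].
Proof.
rewrite mem_padd mem_bigpadd.
case E: (\big[addb/false]_(j | P j) (v \in pvar j)) => /=.
  by move=> _; move/bigaddb_exists: E => [j Pj]; rewrite inE => /eqP ->; right; exists j.
by case: c; rewrite !inE // => /eqP ->; left.
Qed.

Lemma set1_mem_affine (P : pred 'I_m) c (j : 'I_m) : P j -> [set j] \in affine P c.
Proof.
move=> Pj; rewrite mem_padd mem_bigpadd (bigD1 j) //= inE eqxx big1 => [|i /andP [_]].
  by case: c; rewrite !inE // eq_sym; apply/negP => /eqP/setP/(_ j); rewrite !inE eqxx.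
by rewrite inE eq_sym => /negbTE; rewrite (inj_eq set1_inj).
Qed.

Definition below (t : nat) (p : poly) := forall v, v \in p -> forall j : 'I_m, j \in v -> j < t.

Lemma below_padd t p q : below t p -> below t q -> below t (padd p q).
Proof. by move=> bp bq v; rewrite mem_padd; case: (boolP (v \in p)) => [/bp|_ /bq]. Qed.

Lemma below_pmul t p q : below t p -> below t q -> below t (pmul p q).
Proof.
move=> bp bq v /mem_pmulP [a [b [pa qb ->]]] j; rewrite inE.
by case/orP; [apply: bp | apply: bq].
Qed.

Lemma below_pone t : below t pone.
Proof. by move=> v; rewrite inE => /eqP -> j; rewrite inE. Qed.

Lemma below_affine t (P : pred 'I_m) c : (forall j, P j -> j < t) -> below t (affine P c).
Proof. by move=> Pt v /mem_affine [-> j|[i Pi -> j]]; rewrite inE // => /eqP ->; apply: Pt. Qed.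

Lemma lta_imageE B e (i : 'I_m) :
  lta_image B e i = affine [pred j | (j == i) || (j < i) && B i j] (e i).
Proof.
rewrite (affineD1 _ (k := i)) /= ?eqxx //; congr padd; apply: eq_affine => j /=.
by case: (eqVneq j i) => [->|_]; rewrite ?ltnn ?eqxx ?andbF ?andbT.
Qed.

Lemma lta_image_split B e (i : 'I_m) :
  lta_image B e i = padd (pvar i) (affine [pred j : 'I_m | (j < i) && B i j] (e i)).
Proof. by []. Qed.

Lemma lead_mono_lta_image B e (i : 'I_m) : lead_mono (lta_image B e i) [set i].
Proof.
rewrite lta_imageE; split; first by apply: set1_mem_affine; rewrite /= eqxx.
move=> v /mem_affine [->|[j /orP [/eqP ->|/andP [ji _]] ->]] //; rewrite !mweight_set1.
  by rewrite /mweight big_set0.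
by rewrite leq_exp2l // ltnW.
Qed.

Lemma below_lta_image B e (i : 'I_m) t : i < t -> below t (lta_image B e i).
Proof.
move=> it; rewrite lta_imageE; apply: below_affine => j /orP [/eqP -> //|/andP [ji _]].
exact: ltn_trans it.
Qed.

Lemma lta_act_set0 B e : lta_act (B, e) set0 = pone.
Proof. exact: big_set0. Qed.

Lemma lta_actD1 B e (u : mon) (t : 'I_m) : t \in u ->
  lta_act (B, e) u = pmul (lta_image B e t) (lta_act (B, e) (u :\ t)).
Proof.
by move=> tu; apply: peval_inj => S; rewrite peval_pmul !peval_bigpmul (big_setD1 _ tu).
Qed.

Lemma lta_image_mul_act B e (u : mon) (k : 'I_m) : k \in u ->
  pmul (lta_image B e k) (lta_act (B, e) u) = lta_act (B, e) u.
Proof.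
move=> ku; rewrite !(lta_actD1 _ _ ku).
by apply: peval_inj => S; rewrite !peval_pmul andbA andbb.
Qed.

Lemma eq_lta_act B e B' e' (u : mon) :
  {in u, forall i, lta_image B e i = lta_image B' e' i} -> lta_act (B, e) u = lta_act (B', e') u.
Proof. by move=> BB'; apply: eq_bigr. Qed.

Lemma below_lta_act B e (u : mon) t : (forall i, i \in u -> i < t) -> below t (lta_act (B, e) u).
Proof.
move=> ut; apply: (big_ind (below t)); [exact: below_pone | exact: below_pmul |].
by move=> i /ut; apply: below_lta_image.
Qed.

Lemma lead_mono_lta_act B e (u : mon) : lead_mono (lta_act (B, e) u) u.
Proof.
have [n] := ubnP #|u|; elim: n u => // n IH u ltn.
have [->|[t tu]] := set_0Vmem u.
  by rewrite lta_act_set0; split=> [|v]; rewrite inE // => /eqP ->.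
rewrite (lta_actD1 _ _ tu) -{2}(setD1K tu); apply: lead_mono_pmul.
- exact: lead_mono_lta_image.
- by apply: IH; rewrite (cardsD1 t) tu in ltn.
- by rewrite disjoints1 setD11.
Qed.

(* For k in u the image L_k of x_k satisfies L_k * act u = act u, so adding
   L_k + 1 to the affine factor removes x_k without changing the product. *)
Lemma affine_mul_lta_act_absorb B e (P : pred 'I_m) c (u : mon) (k : 'I_m) : k \in u ->
  pmul (affine P c) (lta_act (B, e) u) =
  pmul (affine [pred j | P j (+) ((j == k) || (j < k) && B k j)] (~~ (c (+) e k)))
       (lta_act (B, e) u).
Proof.
move=> ku; have idem := lta_image_mul_act B e ku.
have -> : affine [pred j | P j (+) ((j == k) || (j < k) && B k j)] (~~ (c (+) e k)) =
          padd (padd (affine P c) (lta_image B e k)) pone.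
  rewrite lta_imageE pone_affine !padd_affine addbT.
  by apply: eq_affine => j /=; rewrite addbF.
move: (affine P c) (lta_image B e k) (lta_act (B, e) u) idem => X L A idem.
apply: peval_inj => S; move/(congr1 (peval^~ S)): idem.
rewrite !(peval_pmul, peval_padd, peval_pone).
by case: (peval X S); case: (peval L S); case: (peval A S).
Qed.

(* An affine form whose largest variable is x_k is L_k for a suitable row k. *)
Lemma affine_mul_lta_act_extend B e (P : pred 'I_m) c (u : mon) (k : 'I_m) :
  P k -> (forall j, P j -> j <= k) -> k \notin u ->
  exists B' e', pmul (affine P c) (lta_act (B, e) u) = lta_act (B', e') (k |: u).
Proof.
move=> Pk Pk_le ku.
pose B' := (\matrix_(i, j) if i == k then P j else B i j)%R : 'M[bool]_m.
pose e' := [ffun i => if i == k then c else e i].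
exists B', e'; rewrite (lta_actD1 _ _ (setU11 k u)) setU1K //; congr pmul.
  rewrite lta_imageE ffunE eqxx; apply: eq_affine => j /=; rewrite mxE eqxx.
  case: (eqVneq j k) => [->|njk] //=; case Pj: (P j); rewrite ?andbF //.
  by rewrite ltn_neqAle val_eqE njk Pk_le.
apply: eq_lta_act => i iu; have nik : (i == k) = false by apply: contraNF ku => /eqP <-.
rewrite /lta_image ffunE nik; congr (padd _ (padd _ _)).
by apply: eq_bigl => j; rewrite mxE nik.
Qed.

Definition adjoin_below (n : nat) (u M : mon) := M = u \/ exists2 k : 'I_m, k < n & M = k |: u.

Lemma adjoin_belowS n u M : adjoin_below n u M -> adjoin_below n.+1 u M.
Proof. by case=> [->|[k kn ->]]; [left | right; exists k => //; apply: ltnW]. Qed.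

Lemma lead_mono_affine_mul_act B e (u : mon) n (P : pred 'I_m) c :
  (forall j, P j -> j < n) -> pmul (affine P c) (lta_act (B, e) u) != pzero ->
  exists M, lead_mono (pmul (affine P c) (lta_act (B, e) u)) M /\ adjoin_below n u M.
Proof.
elim: n P c => [|n IH] P c Pn nz.
  have E : pmul (affine P c) (lta_act (B, e) u) = if c then lta_act (B, e) u else pzero.
    apply: peval_inj => S; rewrite peval_pmul peval_affine big_pred0 => [|j]; last first.
      by apply/negbTE/negP => /Pn.
    by case: (c); rewrite ?peval_pzero.
  rewrite E in nz *; move: nz; case: c {E} => [_|]; last by rewrite eqxx.
  by exists u; split; [exact: lead_mono_lta_act | left].
have IHS (Q : pred 'I_m) d :
    (forall j, Q j -> j < n) -> pmul (affine Q d) (lta_act (B, e) u) != pzero ->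
    exists M, lead_mono (pmul (affine Q d) (lta_act (B, e) u)) M /\ adjoin_below n.+1 u M.
  by move=> Qn /(IH Q d Qn) [M [HM uM]]; exists M; split; last apply: adjoin_belowS.
have [mn|nm] := leqP m n; first by apply: IHS => // j _; apply: leq_trans mn.
pose k := Ordinal nm.
have Pltn j : P j -> j != k -> j < n.
  move=> Pj njk; have := Pn j Pj; rewrite ltnS leq_eqVlt => /orP [/eqP jn|//].
  by case/eqP: njk; apply: val_inj.
have [Pk|nPk] := boolP (P k); last first.
  apply: IHS => // j Pj; apply: Pltn => //.
  by apply: contraNneq nPk => jk; rewrite -jk.
have [ku|ku] := boolP (k \in u).
  rewrite (affine_mul_lta_act_absorb _ _ _ _ ku) in nz *; apply: IHS nz => j /=.
  case: (eqVneq j k) => [->|njk]; first by rewrite Pk.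
  case Pj: (P j) => /=; first by move=> _; apply: Pltn.
  by case/andP.
have [B' [e' ->]] := affine_mul_lta_act_extend B e c Pk Pn ku.
by exists (k |: u); split; [exact: lead_mono_lta_act | right; exists k].
Qed.

Definition lowered (f M : mon) := exists2 i, i \in f & adjoin_below i (f :\ i) M.

Lemma lowered_setU1 (u M : mon) (t : 'I_m) :
  t \in u -> lowered (u :\ t) M -> lowered u (t |: M).
Proof.
move=> tu [i /setD1P [it iu] iM]; exists i => //.
have E : t |: (u :\ t :\ i) = u :\ i.
  apply/setP => x; rewrite !inE; case: (eqVneq x t) => [->|] //=.
  by rewrite tu eq_sym it.
by case: iM => [->|[k ki ->]]; [left | right; exists k => //; rewrite setUCA]; rewrite E.
Qed.

Lemma lead_mono_lta_act_add B e B' e' (u : mon) :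
  lta_act (B, e) u != lta_act (B', e') u ->
  exists M, lead_mono (padd (lta_act (B, e) u) (lta_act (B', e') u)) M /\ lowered u M.
Proof.
have [n] := ubnP #|u|; elim: n u => // n IH u ltn neq.
have [u0|/set_max_index [t tu ut]] := eqVneq u set0.
  by rewrite u0 !lta_act_set0 eqxx in neq.
rewrite -padd_eq0 in neq; rewrite !(lta_actD1 _ _ tu) !lta_image_split in neq *.
have bA : below t (lta_act (B, e) (u :\ t)) := below_lta_act ut.
have bA' : below t (lta_act (B', e') (u :\ t)) := below_lta_act ut.
have [EA|NA] := eqVneq (lta_act (B, e) (u :\ t)) (lta_act (B', e') (u :\ t)).
  rewrite -EA padd_pmul_padd_same padd_affine in neq *.
  have [|M [HM uM]] := lead_mono_affine_mul_act (n := t) _ neq.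
    by move=> j /=; case: (j < t).
  by exists M; split; last exists t.
have [|M0 [[M0A M0max] M0u]] := IH (u :\ t) _ NA; first by rewrite (cardsD1 t) tu in ltn.
exists (t |: M0); split; last exact: lowered_setU1.
have tM0 : t \notin M0 by apply/negP => /(below_padd bA bA' M0A); rewrite ltnn.
rewrite padd_pmul_padd; apply: lead_mono_padd_lt.
  by apply: lead_mono_pmul (lead_mono_pvar t) _ _; [split | rewrite disjoints1].
have bR (B0 : 'M[bool]_m) (e0 : {ffun 'I_m -> bool}) :
    below t (affine [pred j : 'I_m | (j < t) && B0 t j] (e0 t)).
  by apply: below_affine => j /andP [].
have bQ := below_padd (below_pmul (bR B e) bA) (below_pmul (bR B' e') bA').
move=> v /bQ /mweight_below vt.
by rewrite mweightU_disjoint ?disjoints1 // mweight_set1 (leq_trans vt) ?leq_addr.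
Qed.

Lemma lowered_subset (f M : mon) :
  lowered f M -> exists2 i, i \in f & (f :\ i \subset M) && (#|M| <= #|f|).
Proof.
case=> i fi [->|[j _ ->]]; exists i; rewrite // (cardsD1 i f) fi.
  by rewrite subxx leq_addl.
by rewrite subsetUr cardsU1 leq_add2r leq_b1.
Qed.

Lemma lowered_card_setD (f M : mon) : lowered f M -> #|M :\: f| <= 1.
Proof.
case/lowered_subset=> i fi /andP [fiM Mf].
have : #|f :\ i| <= #|M :&: f| by apply/subset_leq_card; rewrite subsetI fiM subD1set.
by have := cardsID f M; have := cardsD1 i f; rewrite fi; lia.
Qed.

Lemma common_lowered_meet_card (f g M : mon) :
  lowered f M -> lowered g M -> #|f| = #|g| -> #|f| <= #|f :&: g| + 2.
Proof.
move=> /lowered_subset [i fi /andP [fiM Mf]] /lowered_subset [k gk /andP [gkM _]] fg.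
have U : #|(f :\ i) :|: (g :\ k)| <= #|M| by apply/subset_leq_card; rewrite subUset fiM gkM.
have I : #|(f :\ i) :&: (g :\ k)| <= #|f :&: g| by apply/subset_leq_card/setISS; apply: subD1set.
have := cardsU (f :\ i) (g :\ k); have := cardsD1 i f; have := cardsD1 k g.
by rewrite fi gk; lia.
Qed.

Lemma common_lowered_top (f g M : mon) :
  lowered f M -> lowered g M -> #|f| = #|g| -> ~ two_largest_in ((f :|: g) :\: (f :&: g)) f.
Proof.
move=> Mf [k gk gM] fg [a [b [aD bD ab Dtop /andP [af bf]]]].
have [ag bg] : a \notin g /\ b \notin g by move: aD bD; rewrite !inE af bf /= !andbT.
have [i fi /andP [fiM _]] := lowered_subset Mf.
pose c := if a == i then b else a.
have [cf cg ac] : [/\ c \in f, c \notin g & a <= c] by rewrite /c; case: ifP => // _; rewrite ltnW.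
have cM : c \in M.
  apply: (subsetP fiM); rewrite !inE cf andbT /c.
  by case: (eqVneq a i) => [<-|//]; apply: contraTneq ab => ->; rewrite ltnn.
have [l lk Ml] : exists2 l : 'I_m, l < k & M = l |: (g :\ k).
  by case: gM => [Mg|//]; move: cM; rewrite Mg !inE (negbTE cg) andbF.
have kf : k \in f.
  apply: contraT => kf.
  have kD : k \in (f :|: g) :\: (f :&: g) by rewrite !inE gk (negbTE kf).
  have ka : k < a by apply: (Dtop k kD); apply: contraTneq gk => ->.
  move: cM; rewrite Ml !inE (negbTE cg) andbF orbF => /eqP cl; rewrite -cl in lk.
  by have := leq_ltn_trans ac (ltn_trans lk ka); rewrite ltnn.
have gfM : g :\: f \subset M :\: f.
  apply/subsetP => x; rewrite !inE Ml !inE => /andP [xf xg]; rewrite xf xg /=.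
  by rewrite andbT; apply/orP; right; apply: contraNneq xf => ->.
have ab2 : 2 <= #|f :\: g|.
  rewrite (_ : 2 = #|[set a; b]|); last by rewrite cards2 -val_eqE (ltn_eqF ab).
  apply/subset_leq_card/subsetP => x.
  by rewrite !inE => /orP [] /eqP ->; rewrite ?af ?bf ?ag ?bg.
have fgD : #|f :\: g| = #|g :\: f|.
  by apply/eqP; rewrite -(eqn_add2l #|f :&: g|) cardsID setIC cardsID fg.
have := leq_trans (subset_leq_card gfM) (lowered_card_setD Mf).
by rewrite -fgD leqNgt ab2.
Qed.

Lemma lead_mono_orbit_add (f : mon) a a' :
  a \in lta_orbit f -> a' \in lta_orbit f -> a != a' ->
  exists M, lead_mono (padd a a') M /\ lowered f M.
Proof.
by case/imsetP=> [[B e] _ ->] /imsetP [[B' e'] _ ->]; apply: lead_mono_lta_act_add.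
Qed.

Lemma card_sumset_orbits (f g : mon) :
  (forall M, lowered f M -> lowered g M -> False) ->
  #|sumset (lta_orbit f) (lta_orbit g)| = #|lta_orbit f| * #|lta_orbit g|.
Proof.
move=> fg; rewrite /sumset curry_imset2X card_in_imset ?cardsX // => -[a b] [a' b'].
rewrite !inE /= => /andP [fa gb] /andP [fa' gb'] E.
have E' : padd a a' = padd b b'.
  apply: peval_inj => S; move/(congr1 (peval^~ S)): E; rewrite !peval_padd.
  by case: (peval a S); case: (peval a' S); case: (peval b S); case: (peval b' S).
have [Eaa|aa'] := eqVneq a a'.
  rewrite -Eaa in E' *; have : padd b b' == pzero by rewrite -E' padd_eq0.
  by rewrite padd_eq0 => /eqP <-.
have bb' : b != b' by rewrite -padd_eq0 -E' padd_eq0.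
have [M [aM fM]] := lead_mono_orbit_add fa fa' aa'.
have [M' [bM' gM']] := lead_mono_orbit_add gb gb' bb'.
rewrite E' in aM; rewrite (lead_mono_uniq aM bM') in fM.
by case: (fg M' fM gM').
Qed.

End OrbitSums.

Theorem theorem7 (m : nat) (I : {set monomial m}) (f g : monomial m) :
  decreasing I ->
  f \in I -> #|f| = maxdeg I ->
  g \in I -> #|g| = maxdeg I ->
  (* ind(fg / gcd(f,g)) = (ind f :|: ind g) :\: (ind f :&: ind g) *)
  (two_largest_in ((f :|: g) :\: (f :&: g)) f \/
   two_largest_in ((f :|: g) :\: (f :&: g)) g \/
   #|f :&: g| + 2 < maxdeg I) ->
  #|sumset (lta_orbit f) (lta_orbit g)| = #|lta_orbit f| * #|lta_orbit g|.
Proof.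
move=> _ _ degf _ degg cond; apply: card_sumset_orbits => M Mf Mg.
have fg : #|f| = #|g| by rewrite degf degg.
case: cond => [top|[top|small]].
- exact: common_lowered_top Mf Mg fg top.
- by rewrite setUC setIC in top; apply: common_lowered_top Mg Mf (esym fg) top.
- by move: small; rewrite -degf ltnNge (common_lowered_meet_card Mf Mg fg).
Qed.
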